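(* Let $\Gamma$ and $\Gamma'$ be triangulations of connected closed $2$-dimensional surfaces $M$ and $M'$, and let $F$ and $F'$ be faces of $\Gamma$ and $\Gamma'$ respectively. For every special homeomorphism $g:\partial F\to\partial F'$, the connected sum $\Gamma\#_g\Gamma'$ is $3$-colorable if and only if both $\Gamma$ and $\Gamma'$ are $3$-colorable.
   Context: A triangulation of a connected closed surface (not necessarily orientable) is a closed $2$-cell embedding of a connected finite simple graph all of whose faces are triangles. A homeomorphism $g:\partial F\to\partial F'$ is special if it maps vertices to vertices. The connected sum $\Gamma\#_g\Gamma'$ is the triangulation of $M\# M'$ obtained from $\Gamma$ and $\Gamma'$ by removing the interiors of $F$ and $F'$ and gluing $\partial F$ to $\partial F'$ via $g$. A graph is $3$-colorable if it admits a proper vertex coloring with $3$ colors. *)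

From HB Require Import structures.
From mathcomp Require Import all_boot.
Set Implicit Arguments. Unset Strict Implicit. Unset Printing Implicit Defensive.

(* Faces are
   indexed (not just a set of triples) so that e.g. K3 on the sphere, whose two
   faces have the same boundary, is allowed. *)

Section Tri.
Variables (V Fc : finType) (bd : Fc -> {set V}).

Definition tri_adj : rel V :=
  fun u v => (u != v) && [exists f, (u \in bd f) && (v \in bd f)].

Definition link_rel (v : V) : rel V :=
  fun a b => [exists f, [&& v \in bd f, a \in bd f, b \in bd f,
                          a != v, b != v & a != b]].

(* Gluing the triangles bd f along common edges yields a connected closed
   surface with the graph 2-cell embedded and all faces triangles. *)
Definition is_triangulation : Prop :=
  [/\ forall f, #|bd f| = 3,
      forall v, exists f, v \in bd f,
      forall u v, tri_adj u v ->
        #|[set f | (u \in bd f) && (v \in bd f)]| = 2,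
      (* every vertex link is connected (hence a single cycle: disk nbhd) *)
      forall v a b, tri_adj v a -> tri_adj v b -> connect (link_rel v) a b
    &
      forall u v, connect tri_adj u v].

Definition three_colorable : Prop :=
  exists c : V -> 'I_3, forall u v, tri_adj u v -> c u != c v.

End Tri.

Section ConnSum.
Variables (V Fc V' Fc' : finType) (bd : Fc -> {set V}) (bd' : Fc' -> {set V'}).
Variables (F : Fc) (F' : Fc') (g : V -> V').

(* g restricted to the vertices of F is a bijection onto the vertices of F';
   this is exactly the data of a special homeomorphism dF -> dF' (up to
   isotopy, which does not affect the resulting triangulation). *)
Definition special_map : Prop :=
  {in bd F &, injective g} /\ g @: bd F = bd' F'.

(* vertices of the connected sum: vertices of V not on F, plus all of V'
   (vertices of F are identified with their images in F' under g) *)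
Definition cs_vertex := ({x : V | x \notin bd F} + V')%type.
Definition cs_face := ({f : Fc | f != F} + {f : Fc' | f != F'})%type.

Definition cs_of_V (x : V) : cs_vertex :=
  if insub x is Some y then inl y else inr (g x).

Definition cs_bd (f : cs_face) : {set cs_vertex} :=
  match f with
  | inl f1 => cs_of_V @: bd (val f1)
  | inr f2 => [set inr x | x in bd' (val f2)]
  end.

End ConnSum.

Arguments special_map {V Fc V' Fc'} bd bd' F F' g.
Arguments cs_bd {V Fc V' Fc'} bd bd' F F' g f.

From mathcomp Require Import all_boot.
Set Implicit Arguments. Unset Strict Implicit. Unset Printing Implicit Defensive.

(* Every edge of the connected sum comes from an edge of one summand, and every
   edge of either summand survives: an edge of the removed face F lies on a
   second face of its own triangulation, which is kept.  Hence colourings of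
   the sum restrict to colourings of both summands.  Conversely, in a proper
   3-colouring the three vertices of a face get three distinct colours, so the
   colours of Gamma' can be permuted to agree with those of Gamma along the
   glued triangle, and the two colourings then glue. *)

Section Coloring.
Variables (V Fc : finType) (bd : Fc -> {set V}).

Definition proper_coloring (C : eqType) (c : V -> C) : Prop :=
  forall u v, tri_adj bd u v -> c u != c v.

Lemma tri_adj_face f u v : u \in bd f -> v \in bd f -> u != v -> tri_adj bd u v.
Proof. by move=> hu hv neq; rewrite /tri_adj neq; apply/existsP; exists f; rewrite hu hv. Qed.

Lemma proper_coloring_inj_face (C : eqType) (c : V -> C) f :
  proper_coloring c -> {in bd f &, injective c}.
Proof.
move=> hc u v hu hv e; apply/eqP; apply: contraT => neq.
by have := hc _ _ (tri_adj_face hu hv neq); rewrite e eqxx.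
Qed.

Lemma proper_coloring_comp (C : eqType) (c : V -> C) (s : C -> C) :
  injective s -> proper_coloring c -> proper_coloring (s \o c).
Proof. by move=> s_inj hc u v /hc; rewrite /= (inj_eq s_inj). Qed.

Lemma edge_other_face f u v :
  is_triangulation bd -> u \in bd f -> v \in bd f -> u != v ->
  exists2 f2, f2 != f & (u \in bd f2) && (v \in bd f2).
Proof.
case=> _ _ two_faces _ _ hu hv neq.
have := two_faces _ _ (tri_adj_face hu hv neq).
rewrite (cardsD1 f) inE hu hv /= add1n => -[/eqP/cards1P [f2 e]].
by have := set11 f2; rewrite -e !inE => /andP [f2f h2]; exists f2.
Qed.

End Coloring.

Lemma injective_recoloring (T C : finType) (A : {set T}) (c d : T -> C) :
  #|A| = #|C| -> {in A &, injective c} -> {in A &, injective d} ->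
  exists2 s : C -> C, injective s & {in A, forall u, s (d u) = c u}.
Proof.
move=> cardA c_inj d_inj.
have dA : d @: A = [set: C].
  by apply/eqP; rewrite eqEcard subsetT cardsT (card_in_imset d_inj) cardA /=.
pose s j := if [pick u in A | d u == j] is Some u then c u else j.
have sE : {in A, forall u, s (d u) = c u}.
  move=> u hu; rewrite /s; case: pickP => [u0 /andP [hu0 /eqP e] | none].
    by rewrite (d_inj _ _ hu0 hu e).
  by have := none u; rewrite hu eqxx.
exists s => // j1 j2.
have /imsetP [u1 h1 ->] : j1 \in d @: A by rewrite dA inE.
have /imsetP [u2 h2 ->] : j2 \in d @: A by rewrite dA inE.
by rewrite !sE // => /c_inj ->.
Qed.

Section ConnectedSum.
Variables (V Fc V' Fc' : finType) (bd : Fc -> {set V}) (bd' : Fc' -> {set V'}).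
Variables (F : Fc) (F' : Fc') (g : V -> V').
Hypothesis g_special : special_map bd bd' F F' g.

Local Notation of_V := (cs_of_V bd F g).
Local Notation cs_adj := (tri_adj (cs_bd bd bd' F F' g)).

Lemma special_map_inj : {in bd F &, injective g}.
Proof. by case: g_special. Qed.

Lemma special_map_face u : u \in bd F -> g u \in bd' F'.
Proof. by case: g_special => _ <- hu; rewrite imset_f. Qed.

Lemma cs_of_V_face u : u \in bd F -> of_V u = inr (g u).
Proof. by move=> hu; rewrite /cs_of_V insubN // negbK. Qed.

Lemma cs_of_V_inj : injective of_V.
Proof.
move=> u v; rewrite /cs_of_V.
case: insubP => [y _ <-|hu]; case: insubP => [z _ <-|hv] //=.
- by case=> ->.
- by case=> /special_map_inj; apply; rewrite -[_ \in _]negbK.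
Qed.

Lemma cs_adj_of_V u v :
  is_triangulation bd' -> tri_adj bd u v -> cs_adj (of_V u) (of_V v).
Proof.
move=> tri' /andP [neq /existsP [f /andP [hu hv]]].
case: (eqVneq f F) hu hv => [-> hu hv | fF hu hv].
  rewrite !cs_of_V_face //.
  have gneq : g u != g v by apply: contra neq => /eqP /(special_map_inj hu hv) ->.
  have [f2 f2F' /andP [h1 h2]] :=
    edge_other_face tri' (special_map_face hu) (special_map_face hv) gneq.
  by apply: (tri_adj_face (f := inr (exist _ f2 f2F'))); rewrite ?imset_f.
apply: (tri_adj_face (f := inl (exist _ f fF))); rewrite ?imset_f //.
by rewrite (inj_eq cs_of_V_inj).
Qed.

Lemma cs_adj_inr x y :
  is_triangulation bd -> tri_adj bd' x y -> cs_adj (inr x) (inr y).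
Proof.
move=> tri /andP [neq /existsP [f /andP [hx hy]]].
case: (eqVneq f F') hx hy => [-> | fF' hx hy]; last first.
  by apply: (tri_adj_face (f := inr (exist _ f fF'))); rewrite ?imset_f.
case: g_special neq => _ <- neq /imsetP [u hu ex] /imsetP [v hv ey].
rewrite {}ex {}ey in neq *.
have uv : u != v by apply: contra neq => /eqP ->.
have [f1 f1F /andP [h1 h2]] := edge_other_face tri hu hv uv.
rewrite -(cs_of_V_face hu) -(cs_of_V_face hv).
apply: (tri_adj_face (f := inl (exist _ f1 f1F))); rewrite ?imset_f //.
by rewrite (inj_eq cs_of_V_inj).
Qed.

Definition cs_glue (C : Type) (c : V -> C) (c' : V' -> C) (w : cs_vertex V' bd F) : C :=
  match w with inl y => c (val y) | inr x => c' x end.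

Lemma cs_glue_of_V (C : Type) (c : V -> C) (c' : V' -> C) :
  {in bd F, forall u, c' (g u) = c u} -> forall u, cs_glue c c' (of_V u) = c u.
Proof.
move=> agree u; rewrite /cs_of_V; case: insubP => [y _ <- // | hu] /=.
by rewrite agree // -[_ \in _]negbK.
Qed.

Lemma proper_coloring_cs_glue (C : eqType) (c : V -> C) (c' : V' -> C) :
  {in bd F, forall u, c' (g u) = c u} ->
  proper_coloring bd c -> proper_coloring bd' c' ->
  proper_coloring (cs_bd bd bd' F F' g) (cs_glue c c').
Proof.
move=> agree hc hc' a b /andP [neq /existsP [[f1|f2] /andP []]] /=.
  move=> /imsetP [u hu ea] /imsetP [v hv eb]; subst a b.
  rewrite !(cs_glue_of_V agree); apply: hc.
  by apply: (tri_adj_face hu hv); apply: contra neq => /eqP ->.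
move=> /imsetP [x hx ea] /imsetP [y hy eb]; subst a b; apply: hc'.
by apply: (tri_adj_face hx hy); apply: contra neq => /eqP ->.
Qed.

End ConnectedSum.

Theorem lemma3 (V Fc V' Fc' : finType) (bd : Fc -> {set V}) (bd' : Fc' -> {set V'})
  (F : Fc) (F' : Fc') (g : V -> V') :
  is_triangulation bd -> is_triangulation bd' ->
  special_map bd bd' F F' g ->
  (three_colorable (cs_bd bd bd' F F' g) <->
   three_colorable bd /\ three_colorable bd').
Proof.
move=> tri tri' g_special; split.
  case=> k hk; split.
    by exists (k \o cs_of_V bd F g) => u v /(cs_adj_of_V g_special tri'); apply: hk.
  by exists (k \o inr) => x y /(cs_adj_inr g_special tri); apply: hk.
case=> [[c hc] [c' hc']].
have c'g_inj : {in bd F &, injective (c' \o g)}.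
  move=> u v hu hv /(proper_coloring_inj_face hc' (special_map_face g_special hu)
                                               (special_map_face g_special hv)).
  exact: (special_map_inj g_special).
have [|s s_inj agree] := injective_recoloring _ (proper_coloring_inj_face hc) c'g_inj.
  by case: tri => ->; rewrite card_ord.
exists (cs_glue c (s \o c')).
exact: proper_coloring_cs_glue agree hc (proper_coloring_comp s_inj hc').
Qed.
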